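(* Let $d\ge1$, $\ell\ge 2$, and let $u,v$ be vertices of the cyclic Kautz digraph $CK(d,\ell)$. There is a directed path from $u$ to $v$ in $CK(d,\ell)$ if and only if $v$ can be obtained from $u$ by a finite sequence of the following operations: (i) rotation, replacing $a_1a_2\ldots a_\ell$ by $a_2\ldots a_\ell a_1$; (ii) valid swap, replacing a single symbol $a_i$ by a symbol $x\in\Sigma$ that differs from both cyclic neighbours $a_{i-1}$ and $a_{i+1}$ (indices taken cyclically modulo $\ell$).
   Context: Let $\Sigma=\{0,1,\dots,d\}$. The cyclic Kautz digraph $CK(d,\ell)$ has as vertices all sequences $a_1\ldots a_\ell\in\Sigma^\ell$ with $a_i\neq a_{i+1}$ for $1\le i\le \ell-1$ and $a_1\neq a_\ell$, with an arc from $a_1\ldots a_\ell$ to $b_1\ldots b_\ell$ iff both are vertices and $b_i=a_{i+1}$ for $1\le i\le\ell-1$. Both operations map vertices of $CK(d,\ell)$ to vertices of $CK(d,\ell)$ (a vertex can be viewed as a cyclic arrangement of symbols on a disc with a marked starting position; rotation moves the marked position). *)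

From mathcomp Require Import all_boot.
From Stdlib Require Import Relations.
Set Implicit Arguments. Unset Strict Implicit. Unset Printing Implicit Defensive.

(* Alphabet Sigma = {0,...,d}; words of length l are seq nat. *)
Definition in_alphabet (d : nat) (s : seq nat) : bool := all (fun a => a <= d) s.

Definition ck_vertex (d l : nat) (s : seq nat) : Prop :=
  size s = l /\ in_alphabet d s /\
  (forall i, i < l -> nth 0 s i <> nth 0 s ((i + 1) %% l)).

Definition ck_arc (d l : nat) (u v : seq nat) : Prop :=
  ck_vertex d l u /\ ck_vertex d l v /\
  (forall i, i < l.-1 -> nth 0 v i = nth 0 u i.+1).

Definition ck_path (d l : nat) : relation (seq nat) := clos_refl_trans _ (ck_arc d l).

Definition rotation_op (u v : seq nat) : Prop := v = rot 1 u.

Definition swap_op (d l : nat) (u v : seq nat) : Prop :=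
  exists i x, i < l /\ x <= d /\
    x <> nth 0 u ((i + l - 1) %% l) /\ x <> nth 0 u ((i + 1) %% l) /\
    v = set_nth 0 u i x.

Definition ck_op (d l : nat) (u v : seq nat) : Prop :=
  rotation_op u v \/ swap_op d l u v.

Definition ck_reach_ops (d l : nat) : relation (seq nat) := clos_refl_trans _ (ck_op d l).

(* An arc u -> v is a rotation of u followed by a valid swap of the last symbol,
   and a rotation is itself an arc.  Conversely, a valid swap at position i is
   realised by rotating i times, taking the arc that writes the new symbol in
   place of the one rotated to the end, and rotating the remaining l - i - 1
   times; rotations are arcs, so all of these steps are paths in CK(d,l). *)

From mathcomp Require Import all_boot zify.
From Stdlib Require Import Relations.

Set Implicit Arguments. Unset Strict Implicit.

#[local] Arguments rt_step {A R x y}.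
#[local] Arguments rt_refl {A R x}.
#[local] Arguments rt_trans {A R x y z}.

Lemma modn_wrap (a l : nat) : l <= a < l + l -> a %% l = a - l.
Proof.
case/andP=> la al; have -> : a = (a - l) + l by lia.
by rewrite modnDr modn_small; lia.
Qed.

Lemma nth_rot (T : Type) (x0 : T) (s : seq T) n i : n <= size s -> i < size s ->
  nth x0 (rot n s) i = nth x0 s ((i + n) %% size s).
Proof.
move=> hn hi; rewrite /rot nth_cat size_drop.
case: ltnP => h.
  by rewrite nth_drop addnC modn_small //; lia.
rewrite nth_take; last by lia.
rewrite modn_wrap; last by lia.
by have -> : i + n - size s = i - (size s - n) by lia.
Qed.

Lemma set_nth_rcons (T : Type) (x0 : T) (s : seq T) a b :
  set_nth x0 (rcons s a) (size s) b = rcons s b.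
Proof. by elim: s => //= c s ->. Qed.

Lemma ck_vertexP {d l s} : 2 <= l -> ck_vertex d l s <->
  [/\ size s = l, in_alphabet d s,
      forall i, i.+1 < l -> nth 0 s i <> nth 0 s i.+1
    & nth 0 s l.-1 <> nth 0 s 0].
Proof.
move=> hl; have el : l.-1 + 1 = l by lia.
split.
  case=> hs [ha hc]; split=> // [i hi|].
    by have := hc i (ltnW hi); rewrite modn_small addn1.
  have hl1 : l.-1 < l by lia.
  by have := hc l.-1 hl1; rewrite el modnn.
case=> hs ha hc hlast; do 2!split=> //; move=> i hi.
case: (ltnP i.+1 l) => h; first by rewrite modn_small addn1 //; apply: hc.
have -> : i = l.-1 by lia.
by rewrite el modnn.
Qed.

Section RconsBehead.

Variables (d l : nat) (s : seq nat) (x : nat).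
Hypotheses (hl : 2 <= l) (hs : ck_vertex d l s) (hx : x <= d)
  (hx1 : x <> nth 0 s 1) (hxl : x <> nth 0 s l.-1).

Lemma ck_vertex_rcons_behead : ck_vertex d l (rcons (behead s) x).
Proof.
case/(ck_vertexP hl): hs => sz ha hc _.
have szb : size (behead s) = l.-1 by rewrite size_behead sz.
apply/(ck_vertexP hl); split.
- by rewrite size_rcons szb; lia.
- rewrite /in_alphabet all_rcons hx /=.
  by apply/allP => y /mem_behead; apply/(allP ha).
- move=> i hi; rewrite !nth_rcons szb.
  have -> : i < l.-1 by lia.
  case: (ltnP i.+1 l.-1) => h; first by rewrite !nth_behead; apply: hc; lia.
  have ei : i.+1 = l.-1 by lia.
  by rewrite ei eqxx nth_behead ei => e; apply: hxl; rewrite e.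
- rewrite !nth_rcons szb ltnn eqxx.
  have -> : 0 < l.-1 by lia.
  by rewrite nth_behead => e; apply: hx1.
Qed.

Lemma ck_arc_rcons_behead : ck_arc d l s (rcons (behead s) x).
Proof.
do 2!split=> //; first exact: ck_vertex_rcons_behead.
move=> i hi; case: hs => sz _.
by rewrite nth_rcons size_behead sz hi nth_behead.
Qed.

End RconsBehead.

Lemma rot1_rcons_behead (s : seq nat) : 0 < size s ->
  rot 1 s = rcons (behead s) (nth 0 s 0).
Proof. by case: s => // a t _; rewrite rot1_cons. Qed.

Lemma ck_arc_rot1 d l s : 2 <= l -> ck_vertex d l s -> ck_arc d l s (rot 1 s).
Proof.
move=> hl hs; have [sz ha hc hlast] := proj1 (ck_vertexP hl) hs.
rewrite rot1_rcons_behead ?sz; last by lia.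
apply: ck_arc_rcons_behead => //.
- by apply/(allP ha)/mem_nth; rewrite sz; lia.
- by apply: hc.
- by move=> e; apply: hlast; rewrite e.
Qed.

Lemma ck_path_rot d l s k : 2 <= l -> ck_vertex d l s -> k <= l ->
  ck_vertex d l (rot k s) /\ ck_path d l s (rot k s).
Proof.
move=> hl hs; elim: k => [|k IH] hk; first by rewrite rot0; split=> //; apply: rt_refl.
have [hv hp] := IH (ltnW hk).
have -> : rot k.+1 s = rot 1 (rot k s).
  by rewrite -rotD // add1n; case: hs => ->.
have ha := ck_arc_rot1 hl hv.
by split; [case: ha => _ [] | apply: rt_trans hp (rt_step ha)].
Qed.

Lemma rot_set_nth (s : seq nat) i x : i < size s ->
  rcons (behead (rot i s)) x = rot i.+1 (set_nth 0 s i x).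
Proof.
move=> hi; have szt : size (rcons (take i s) x) = i.+1.
  by rewrite size_rcons size_take hi.
rewrite set_nthE hi -cat_rcons -{1}szt rot_size_cat /rot (drop_nth 0) //=.
by rewrite rcons_cat.
Qed.

Lemma ck_path_swap d l u v : 2 <= l -> ck_vertex d l u -> swap_op d l u v ->
  ck_vertex d l v /\ ck_path d l u v.
Proof.
move=> hl hu [i [x [hi [hx [hprev [hnext ->]]]]]].
have sz : size u = l by case: hu.
have [hr hpr] := ck_path_rot hl hu (ltnW hi).
have hnext' : x <> nth 0 (rot i u) 1.
  by rewrite nth_rot ?sz 1?addnC //; lia.
have hprev' : x <> nth 0 (rot i u) l.-1.
  by rewrite nth_rot ?sz; [have -> : l.-1 + i = i + l - 1 by lia | lia | lia].
have ha := ck_arc_rcons_behead hl hr hx hnext' hprev'.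
rewrite rot_set_nth ?sz // in ha.
set w := set_nth 0 u i x in ha *.
have szw : size w = l by rewrite size_set_nth sz; apply/maxn_idPr.
have [hw _] := ha.2.
have rot_back : rot (l - i.+1) (rot i.+1 w) = w.
  have hsum : l - i.+1 + i.+1 = size w by rewrite szw subnK.
  by rewrite -rotD ?hsum ?rot_size.
have [hv hp] := ck_path_rot hl hw (leq_subr i.+1 l).
rewrite rot_back in hv hp.
by split=> //; apply: rt_trans hpr (rt_trans (rt_step ha) hp).
Qed.

Lemma ck_path_ops d l u v : 2 <= l -> ck_vertex d l u -> ck_reach_ops d l u v ->
  ck_vertex d l v /\ ck_path d l u v.
Proof.
move=> hl hu h; elim: h hu => {u v} [u v [->|hop]|u|u w v _ IH1 _ IH2] hu.
- have ha := ck_arc_rot1 hl hu.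
  by split; [case: ha => _ [] | apply: rt_step].
- exact: ck_path_swap.
- by split=> //; apply: rt_refl.
- have [hw p1] := IH1 hu; have [hv p2] := IH2 hw.
  by split=> //; apply: rt_trans p1 p2.
Qed.

Lemma ck_ops_arc d l u v : 2 <= l -> ck_arc d l u v -> ck_reach_ops d l u v.
Proof.
move=> hl [hu [hv harc]].
have [szv hav hcv hlastv] := proj1 (ck_vertexP hl) hv.
case: u hu harc => [|a t] hu harc; first by case: hu => /= l0; lia.
have szt : size t = l.-1 by case: hu => /= <-.
set b := nth 0 v l.-1.
have ev : v = rcons t b.
  apply: (@eq_from_nth _ 0); first by rewrite size_rcons szt szv; lia.
  move=> i; rewrite szv => hi; rewrite nth_rcons szt.
  case: ltnP => h; first by rewrite harc.
  have -> : i = l.-1 by lia.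
  by rewrite eqxx.
have nth_t j : j < l.-1 -> nth 0 v j = nth 0 t j.
  by move=> hj; rewrite ev nth_rcons szt hj.
have hpen : nth 0 t l.-2 <> b.
  rewrite -nth_t; last by lia.
  by have := hcv l.-2; rewrite (_ : l.-2.+1 = l.-1); [apply; lia | lia].
have hfirst : nth 0 t 0 <> b.
  by rewrite -nth_t; [move=> e; apply: hlastv; rewrite e | lia].
apply: (@rt_trans _ _ _ (rcons t a)).
  by apply/rt_step; left; rewrite /rotation_op rot1_cons.
apply: rt_step; right; exists l.-1, b; split; first by lia.
split; first by apply/(allP hav)/mem_nth; rewrite szv; lia.
split.
  rewrite modn_wrap; last by lia.
  have -> : l.-1 + l - 1 - l = l.-2 by lia.
  rewrite nth_rcons szt (_ : l.-2 < l.-1); last by lia.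
  by move=> e; apply: hpen; rewrite e.
split.
  rewrite (_ : l.-1 + 1 = l) ?modnn; last by lia.
  rewrite nth_rcons szt (_ : 0 < l.-1); last by lia.
  by move=> e; apply: hfirst; rewrite e.
by rewrite -szt set_nth_rcons -ev.
Qed.

Unset Implicit Arguments.

Theorem lemma3 (d l : nat) (u v : seq nat) :
  1 <= d -> 2 <= l -> ck_vertex d l u -> ck_vertex d l v ->
  (ck_path d l u v <-> ck_reach_ops d l u v).
Proof.
move=> _ hl hu _; split; last by move/(ck_path_ops hl hu) => [].
elim=> {u v hu} [u v /(ck_ops_arc hl)| u | u w v _ IH1 _ IH2] //.
- exact: rt_refl.
- exact: rt_trans IH1 IH2.
Qed.
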